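(* Every non-empty observable hyperproperty is a liveness hyperproperty.
   Context: $\Psi_{\mathrm{inf}}$ and $\Psi_{\mathrm{fin}}$ denote the sets of infinite and of finite traces (sequences of states). $\mathit{Prop}=\mathcal{P}(\Psi_{\mathrm{inf}})$ is the set of all sets of infinite traces. $\mathit{Obs}=\mathcal{P}^{\mathrm{fin}}(\Psi_{\mathrm{fin}})$ is the set of finite sets of finite traces. A hyperproperty is a subset $P\subseteq\mathit{Prop}$. For $S\in\mathit{Obs}$ and $T\in\mathit{Prop}$, $S\le T$ iff for every $t\in S$ there is a trace $t'$ such that the concatenation $t\circ t'$ is in $T$. $P$ is a liveness hyperproperty iff for every $S\in\mathit{Obs}$ there exists $S'\in\mathit{Prop}$ with $S\le S'$ and $S'\in P$. $P$ is an observable hyperproperty iff for every $S\in P$ there exists $T\in\mathit{Obs}$ with $T\le S$ such that every $S'\in\mathit{Prop}$ with $T\le S'$ belongs to $P$. *)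

From Stdlib Require Import List.
Import ListNotations.
Set Implicit Arguments.

Section Hyper.
Variable State : Type.

Definition inf_trace := nat -> State.
Definition fin_trace := list State.

Definition HProp := inf_trace -> Prop.
(* Obs = finite sets of finite traces, represented by an enumerating list *)
Definition Obs := list fin_trace.
Definition Hyperprop := HProp -> Prop.

Definition concat (t : fin_trace) (t' : inf_trace) : inf_trace :=
  fun n => match nth_error t n with
           | Some s => s
           | None => t' (n - length t)
           end.

Definition obs_le (S : Obs) (T : HProp) : Prop :=
  forall t, In t S -> exists t' : inf_trace, T (concat t t').

Definition liveness (P : Hyperprop) : Prop :=
  forall S : Obs, exists S' : HProp, obs_le S S' /\ P S'.

Definition observable (P : Hyperprop) : Prop :=
  forall S : HProp, P S ->
    exists T : Obs, obs_le T S /\ (forall S' : HProp, obs_le T S' -> P S').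

End Hyper.


(* Given a state, every finite trace extends to an infinite one, so the set of
   all infinite traces lies above every observation.  The observation that
   witnesses observability of some member of [P] therefore forces this full set
   into [P], and the full set is above every observation: that is liveness. *)

Definition full_prop (State : Type) : HProp State := fun _ => True.

Lemma obs_le_full (State : Type) (s0 : State) (S : Obs State) :
  obs_le S (full_prop State).
Proof. intros t _. exists (fun _ => s0). exact I. Qed.

Lemma observable_full (State : Type) (s0 : State) (P : Hyperprop State) :
  (exists S : HProp State, P S) -> observable P -> P (full_prop State).
Proof.
  intros [S HS] Hobs.
  destruct (Hobs S HS) as [T [_ HT]].
  apply HT, obs_le_full, s0.
Qed.

Theorem theorem4 (State : Type) (s0 : State) (P : Hyperprop State) :
  (exists S : HProp State, P S) -> observable P -> liveness P.
Proof.
  intros Hne Hobs S.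
  exists (full_prop State). split.
  - apply obs_le_full, s0.
  - exact (observable_full State s0 P Hne Hobs).
Qed.
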